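(* Let $Y$ be a countable linear order, $F=\{a_0<\dots<a_{m-1}\}\in\mathsf{age}(Y)$, and $\alpha$ an ordinal. Then $\mathsf{rk}_Y(F)\ge\alpha$ if and only if $\mathsf{rk}(I_j)\ge\alpha$ for every interval $I_j$ ($0\le j\le m$) of $F$ in $Y$, each interval being regarded as a linear order in its own right. In particular, $\mathsf{rk}_Y(F)=\min\{\mathsf{rk}(I_j):0\le j\le m\}$.
   Context: The intervals of $F=\{a_0<\dots<a_{m-1}\}$ in $Y$ are $I_0=\{y\in Y:y<a_0\}$, $I_k=\{y\in Y:a_{k-1}<y<a_k\}$ for $1\le k\le m-1$, and $I_m=\{y\in Y:y>a_{m-1}\}$; if $F=\emptyset$ there is the single interval $I_0=Y$. Let $\mathcal F$ be the class of finite linear orders (language $\{<\}$); countable linear orders are the structures considered; substructures are suborders and $\mathsf{age}(X)$ is the set of finite suborders of $X$. For $A\le B$, $B$ is a prime extension of $A$ if $|B\setminus A|=1$; a realization of $B$ in $X$ (where $A\le X$) is $C\le X$ with $A\le C$ and an order-isomorphism $B\to C$ fixing $A$ pointwise. For $F\in\mathsf{age}(X)$ define by recursion: $\mathsf{rk}_X(F)\ge0$ always; $\mathsf{rk}_X(F)\ge\alpha+1$ iff every prime extension $B\in\mathcal F$ of $F$ has a realization $C$ in $X$ with $\mathsf{rk}_X(C)\ge\alpha$; for limit $\alpha$, $\mathsf{rk}_X(F)\ge\alpha$ iff $\mathsf{rk}_X(F)\ge\beta$ for all $\beta<\alpha$. $\mathsf{rk}_X(F)=\sup\{\alpha:\mathsf{rk}_X(F)\ge\alpha\}$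 (or $\infty$, larger than all ordinals), and $\mathsf{rk}(X)=\mathsf{rk}_X(\emptyset)$. *)

(* Linear orders are types with a strict order relation;
   ordinals are represented by elements of an arbitrary well-ordered type. *)
From Stdlib Require Import List Sorted.
Import ListNotations.

Set Implicit Arguments.

Definition strict_linear_order (X : Type) (lt : X -> X -> Prop) : Prop :=
  (forall x, ~ lt x x) /\
  (forall x y z, lt x y -> lt y z -> lt x z) /\
  (forall x y, lt x y \/ x = y \/ lt y x).

Definition countable_type (X : Type) : Prop :=
  exists f : X -> nat, forall x y, f x = f y -> x = y.

(** Finite subsets (elements of the age, as subsets of X). *)
Definition finite_set (X : Type) (A : X -> Prop) : Prop :=
  exists l : list X, forall x, A x <-> In x l.

Definition finite_type (T : Type) : Prop :=
  exists l : list T, forall t, In t l.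

Definition well_order (O : Type) (lt : O -> O -> Prop) : Prop :=
  strict_linear_order lt /\ well_founded lt.

(** [b] is the immediate predecessor of [a], i.e. [a = b + 1]. *)
Definition is_succ_of (O : Type) (lt : O -> O -> Prop) (a b : O) : Prop :=
  lt b a /\ forall g, ~ (lt b g /\ lt g a).

Definition is_zero (O : Type) (lt : O -> O -> Prop) (a : O) : Prop :=
  forall b, ~ lt b a.

Definition is_limit (O : Type) (lt : O -> O -> Prop) (a : O) : Prop :=
  ~ is_zero lt a /\ forall b, lt b a -> exists g, lt b g /\ lt g a.

(** A prime extension of the finite suborder [A] of [X] is a finite linear
    order [(T, ltT)] together with an embedding [e] of [A] onto a suborder of
    [T] (so [A <= T] up to the identification along [e]) such that exactly
    one point of [T] lies outside the image of [e]. *)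
Definition prime_extension (X : Type) (ltX : X -> X -> Prop) (A : X -> Prop)
  (T : Type) (ltT : T -> T -> Prop) (e : {x : X | A x} -> T) : Prop :=
  strict_linear_order ltT /\ finite_type T /\
  (forall u v, ltT (e u) (e v) <-> ltX (proj1_sig u) (proj1_sig v)) /\
  (exists t0 : T, forall t, t <> t0 <-> exists u, e u = t).

Definition realization (X : Type) (ltX : X -> X -> Prop) (A : X -> Prop)
  (T : Type) (ltT : T -> T -> Prop) (e : {x : X | A x} -> T)
  (C : X -> Prop) : Prop :=
  finite_set C /\ (forall x, A x -> C x) /\
  exists phi : T -> {x : X | C x},
    (forall t t', phi t = phi t' -> t = t') /\
    (forall c, exists t, phi t = c) /\
    (forall t t', ltT t t' <-> ltX (proj1_sig (phi t)) (proj1_sig (phi t'))) /\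
    (forall u, proj1_sig (phi (e u)) = proj1_sig u).

(** Defined by the recursion of the paper (zero / successor / limit cases);
    over a well-order the least fixed point below is the recursive definition. *)
Inductive rk_ge (X : Type) (ltX : X -> X -> Prop) (O : Type)
    (ltO : O -> O -> Prop) : (X -> Prop) -> O -> Prop :=
| rk_ge_zero : forall F a, is_zero ltO a -> rk_ge ltX ltO F a
| rk_ge_succ : forall F a b, is_succ_of ltO a b ->
    (forall (T : Type) (ltT : T -> T -> Prop) (e : {x : X | F x} -> T),
        prime_extension ltX F ltT e ->
        exists C, realization ltX F ltT e C /\ rk_ge ltX ltO C b) ->
    rk_ge ltX ltO F a
| rk_ge_limit : forall F a, is_limit ltO a ->
    (forall b, ltO b a -> rk_ge ltX ltO F b) ->
    rk_ge ltX ltO F a.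

Definition rk_struct_ge (X : Type) (ltX : X -> X -> Prop) (O : Type)
    (ltO : O -> O -> Prop) (a : O) : Prop :=
  rk_ge ltX ltO (fun _ : X => False) a.

(** * Intervals of F = {a_0 < ... < a_{m-1}} (given as the sorted list [l]) *)
Definition in_interval (Y : Type) (ltY : Y -> Y -> Prop) (l : list Y)
    (j : nat) (y : Y) : Prop :=
  (match j with 0 => True | S k => ltY (nth k l y) y end) /\
  ((j < length l)%nat -> ltY y (nth j l y)).

Definition interval_type (Y : Type) (ltY : Y -> Y -> Prop) (l : list Y)
    (j : nat) : Type := {y : Y | in_interval ltY l j y}.

Definition interval_lt (Y : Type) (ltY : Y -> Y -> Prop) (l : list Y)
    (j : nat) (u v : interval_type ltY l j) : Prop :=
  ltY (proj1_sig u) (proj1_sig v).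

(** Index the intervals of a finite [F] in a linear order [X] by the cuts
    (initial segments) [D] of [F].  A prime extension of [F] is determined by the cut
    lying below its new point, and its realizations are exactly the sets [F ∪ {c}]
    with [c] in the interval of that cut; so [rk_X(F) >= β+1] says that every interval
    [I] of [F] contains a [c] with [rk_X(F ∪ {c}) >= β].  Adjoining [c] splits [I] into
    [I ∩ (<c)] and [I ∩ (>c)] and leaves the other intervals alone.  By induction on the
    ordinal, simultaneously for all [X] and [F], [rk_X(F) >= β] iff every interval has
    rank [>= β]; applied inside [I] to the one-point set [{c}] this turns
    [rk(I) >= β+1] into the same condition on [I ∩ (<c)] and [I ∩ (>c)]. *)

From Stdlib Require Import List Sorted Classical ClassicalEpsilon
  FunctionalExtensionality PropExtensionality Lia.
Set Implicit Arguments.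

Lemma proj1_sig_inj (X : Type) (P : X -> Prop) (u v : {x | P x}) :
  proj1_sig u = proj1_sig v -> u = v.
Proof.
  destruct u as [x p], v as [y q]; simpl; intros <-.
  f_equal; apply proof_irrelevance.
Qed.

Lemma pred_ext (X : Type) (P Q : X -> Prop) : (forall x, P x <-> Q x) -> P = Q.
Proof.
  intro H; apply functional_extensionality; intro x.
  now apply propositional_extensionality.
Qed.

Section Ordinals.
Variables (O : Type) (ltO : O -> O -> Prop).

Lemma ordinal_cases (a : O) :
  is_zero ltO a \/ (exists b, is_succ_of ltO a b) \/ is_limit ltO a.
Proof.
  destruct (classic (is_zero ltO a)) as [Hz|Hz]; [now left|right].
  destruct (classic (exists b, is_succ_of ltO a b)) as [Hs|Hs]; [now left|right].
  split; [exact Hz|]. intros b hb. apply NNPP; intro Hn.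
  apply Hs; exists b; split; [exact hb|].
  intros g [h1 h2]; apply Hn; eauto.
Qed.

Hypothesis HO : well_order ltO.

Lemma lt_succ_le {a b c : O} : is_succ_of ltO a b -> ltO c a -> c = b \/ ltO c b.
Proof.
  destruct HO as [[_ [_ Htri]] _]. intros [_ Hs] Hca.
  destruct (Htri c b) as [h|[h|h]]; auto.
  exfalso; exact (Hs c (conj h Hca)).
Qed.

Lemma is_succ_of_unique {a b b' : O} :
  is_succ_of ltO a b -> is_succ_of ltO a b' -> b = b'.
Proof.
  intros Hs Hs'. destruct (lt_succ_le Hs (proj1 Hs')) as [->|h]; [reflexivity|].
  exfalso; exact (proj2 Hs' b (conj h (proj1 Hs))).
Qed.

End Ordinals.

Section Rank.
Variables (X : Type) (ltX : X -> X -> Prop) (O : Type) (ltO : O -> O -> Prop).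

Definition extendable (F : X -> Prop) (b : O) : Prop :=
  forall (T : Type) (ltT : T -> T -> Prop) (e : {x | F x} -> T),
    prime_extension ltX F ltT e ->
    exists C, realization ltX F ltT e C /\ rk_ge ltX ltO C b.

Lemma rk_ge_inv (F : X -> Prop) (a : O) : rk_ge ltX ltO F a ->
  is_zero ltO a \/ (exists b, is_succ_of ltO a b /\ extendable F b) \/
  (is_limit ltO a /\ forall b, ltO b a -> rk_ge ltX ltO F b).
Proof. destruct 1; eauto. Qed.

Lemma rk_ge_ext {F G : X -> Prop} {a : O} :
  (forall x, F x <-> G x) -> rk_ge ltX ltO F a -> rk_ge ltX ltO G a.
Proof. intro H; now rewrite (pred_ext F G H). Qed.

Hypothesis HO : well_order ltO.

Lemma rk_ge_succ_iff {F : X -> Prop} {a b : O} :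
  is_succ_of ltO a b -> (rk_ge ltX ltO F a <-> extendable F b).
Proof.
  intros Hs; split; [|now apply rk_ge_succ].
  intro H. destruct (rk_ge_inv H) as [Hz|[[b' [Hs' He]]|[[_ Hl] _]]].
  - destruct (Hz b (proj1 Hs)).
  - now rewrite (is_succ_of_unique HO Hs Hs').
  - destruct (Hl b (proj1 Hs)) as [g Hg]. destruct (proj2 Hs g Hg).
Qed.

Lemma rk_ge_mono {F : X -> Prop} {a b : O} :
  rk_ge ltX ltO F a -> ltO b a -> rk_ge ltX ltO F b.
Proof.
  pose proof HO as [[_ [Htr _]] Hwf].
  revert F a; induction b as [b IH] using (well_founded_ind Hwf); intros F a H Hba.
  destruct (ordinal_cases ltO b) as [Hz|[[b1 Hs]|Hl]].
  - now apply rk_ge_zero.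
  - destruct (rk_ge_inv H) as [Ha|[[a0 [Hsa Hext]]|[_ Hall]]].
    + destruct (Ha b Hba).
    + apply rk_ge_succ with b1; [exact Hs|]. intros T ltT e Hpe.
      destruct (Hext T ltT e Hpe) as [C [HC HrC]]. exists C; split; [exact HC|].
      apply IH with a0; [apply Hs|exact HrC|].
      destruct (lt_succ_le HO Hsa Hba) as [<-|h]; [apply Hs|].
      exact (Htr _ _ _ (proj1 Hs) h).
    + now apply Hall.
  - apply rk_ge_limit; [exact Hl|]. intros b' hb'. apply IH with a; eauto.
Qed.

End Rank.

Section Isomorphism.
Variables (X X' : Type) (ltX : X -> X -> Prop) (ltX' : X' -> X' -> Prop).
Variables (f : X -> X') (g : X' -> X).
Hypotheses (gf : forall x, g (f x) = x) (fg : forall y, f (g y) = y).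
Hypothesis f_lt : forall x y, ltX x y <-> ltX' (f x) (f y).

Lemma prime_extension_pullback {F : X -> Prop} {G : X' -> Prop}
  (FG : forall x, F x <-> G (f x)) (T : Type) (ltT : T -> T -> Prop)
  (e' : {y | G y} -> T) :
  prime_extension ltX' G ltT e' ->
  exists e, prime_extension ltX F ltT e /\
    forall u w, proj1_sig w = f (proj1_sig u) -> e u = e' w.
Proof.
  intros [HT [Tfin [Hord [t0 Ht0]]]].
  set (e := fun u : {x | F x} => e' (exist G (f (proj1_sig u)) (proj1 (FG _) (proj2_sig u)))).
  assert (He : forall u w, proj1_sig w = f (proj1_sig u) -> e u = e' w).
  { intros u w E. unfold e. f_equal. now apply proj1_sig_inj. }
  exists e; split; [|exact He].
  split; [exact HT|split; [exact Tfin|split]].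
  - intros u v. unfold e. rewrite Hord. symmetry; apply f_lt.
  - exists t0. intro t. rewrite Ht0. split.
    + intros [w <-].
      assert (HF : F (g (proj1_sig w))) by (apply FG; rewrite fg; apply proj2_sig).
      exists (exist F _ HF). apply He. simpl. now rewrite fg.
    + intros [u <-]. eexists; reflexivity.
Qed.

Lemma realization_pushforward {F : X -> Prop} {G : X' -> Prop}
  (FG : forall x, F x <-> G (f x)) (T : Type) (ltT : T -> T -> Prop)
  (e : {x | F x} -> T) (e' : {y | G y} -> T) (C : X -> Prop) :
  (forall u w, proj1_sig w = f (proj1_sig u) -> e u = e' w) ->
  realization ltX F ltT e C -> realization ltX' G ltT e' (fun y => C (g y)).
Proof.
  intros He [[lc Hlc] [FC [phi [Hinj [Hsur [Hphi Hphie]]]]]].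
  split; [|split].
  - exists (map f lc). intro y. rewrite in_map_iff. split.
    + intro h. exists (g y). split; [apply fg|now apply Hlc].
    + intros [x [<- hx]]. rewrite gf. now apply Hlc.
  - intros y hy. apply FC, FG. now rewrite fg.
  - assert (HC : forall x, C x -> C (g (f x))) by (intros x hx; now rewrite gf).
    exists (fun t => exist (fun y => C (g y)) (f (proj1_sig (phi t))) (HC _ (proj2_sig (phi t)))).
    split; [|split; [|split]].
    + intros t t' E. apply Hinj, proj1_sig_inj.
      apply (f_equal (fun w => g (proj1_sig w))) in E. simpl in E. now rewrite !gf in E.
    + intros [y hy]. destruct (Hsur (exist C (g y) hy)) as [t Ht].
      exists t. apply proj1_sig_inj. simpl. rewrite Ht. apply fg.
    + intros t t'. simpl. rewrite <- f_lt. apply Hphi.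
    + intros w.
      assert (HF : F (g (proj1_sig w))) by (apply FG; rewrite fg; apply proj2_sig).
      simpl. rewrite <- (He (exist F _ HF) w) by (simpl; now rewrite fg).
      rewrite Hphie. apply fg.
Qed.

Lemma rk_ge_iso (O : Type) (ltO : O -> O -> Prop) (HO : well_order ltO) (a : O) :
  forall (F : X -> Prop) (G : X' -> Prop), (forall x, F x <-> G (f x)) ->
  rk_ge ltX ltO F a -> rk_ge ltX' ltO G a.
Proof.
  destruct HO as [_ Hwf].
  induction a as [a IH] using (well_founded_ind Hwf). intros F G FG H.
  destruct (rk_ge_inv H) as [Hz|[[b [Hs Hext]]|[Hl Hall]]].
  - now apply rk_ge_zero.
  - apply rk_ge_succ with b; [exact Hs|]. intros T ltT e' Hpe'.
    destruct (prime_extension_pullback FG Hpe') as [e [Hpe He]].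
    destruct (Hext T ltT e Hpe) as [C [HC HrC]].
    exists (fun y => C (g y)). split; [exact (realization_pushforward FG e' He HC)|].
    apply (IH b (proj1 Hs) C); [|exact HrC]. intro x. now rewrite gf.
  - apply rk_ge_limit; [exact Hl|]. intros b hb. now apply (IH b hb F G FG), Hall.
Qed.

End Isomorphism.

Section LinearOrders.
Variables (X : Type) (ltX : X -> X -> Prop).
Hypothesis HX : strict_linear_order ltX.

Lemma not_lt_iff (x y : X) : x <> y -> (~ ltX y x <-> ltX x y).
Proof.
  destruct HX as [Hirr [Htr Htri]]. intro Hne. split.
  - intro h. destruct (Htri x y) as [k|[k|k]]; tauto.
  - intros h k. exact (Hirr _ (Htr _ _ _ h k)).
Qed.

Lemma order_embedding_injective {T : Type} {ltT : T -> T -> Prop} {phi : X -> T} :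
  (forall t, ~ ltT t t) -> (forall x x', ltX x x' <-> ltT (phi x) (phi x')) ->
  forall x x', phi x = phi x' -> x = x'.
Proof.
  destruct HX as [_ [_ Htri]]. intros Hirr Hphi x x' E.
  destruct (Htri x x') as [h|[h|h]]; [|exact h|]; apply Hphi in h;
    rewrite E in h; destruct (Hirr _ h).
Qed.

Definition sub_lt (P : X -> Prop) (u v : {x | P x}) : Prop :=
  ltX (proj1_sig u) (proj1_sig v).

Lemma sub_lt_linear (P : X -> Prop) : strict_linear_order (sub_lt P).
Proof.
  destruct HX as [Hirr [Htr Htri]]. unfold sub_lt. split; [|split].
  - intro u; apply Hirr.
  - intros u v w; apply Htr.
  - intros u v. destruct (Htri (proj1_sig u) (proj1_sig v)) as [h|[h|h]]; auto.
    right; left; now apply proj1_sig_inj.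
Qed.

End LinearOrders.

Section FiniteSets.
Variable X : Type.

Definition add_point (F : X -> Prop) (c : X) (x : X) : Prop := F x \/ x = c.

Lemma finite_add_point (F : X -> Prop) (c : X) :
  finite_set F -> finite_set (add_point F c).
Proof.
  intros [l Hl]. exists (c :: l). intro x. unfold add_point. simpl.
  rewrite Hl. intuition congruence.
Qed.

Lemma finite_option_sig (F : X -> Prop) :
  finite_set F -> finite_type (option {x | F x}).
Proof.
  intros [l Hl].
  set (lift := fun x => match excluded_middle_informative (F x) with
                        | left h => Some (exist F x h) | right _ => None end).
  exists (None :: map lift l). intros [[x hx]|]; [right|now left].
  apply in_map_iff. exists x. split; [|now apply Hl].
  unfold lift. destruct (excluded_middle_informative (F x)) as [h|h]; [|contradiction].
  f_equal; now apply proj1_sig_inj.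
Qed.

End FiniteSets.

Section Cuts.
Variables (X : Type) (ltX : X -> X -> Prop).

(** A cut [D] of [F] is an initial segment of [F]; for [F = {a_0 < ... < a_(m-1)}]
    and [D = {a_0, ..., a_(j-1)}], [cut_interval F D] is the interval [I_j]. *)
Definition cut (F D : X -> Prop) : Prop :=
  (forall a, D a -> F a) /\ (forall a b, F a -> D b -> ltX a b -> D a).

Definition cut_interval (F D : X -> Prop) (y : X) : Prop :=
  ~ F y /\ forall a, F a -> (ltX a y <-> D a).

(** [None] is the new point, placed above [D] and below the rest of [F]. *)
Definition cut_order (F D : X -> Prop) (o o' : option {x | F x}) : Prop :=
  match o, o' with
  | Some u, Some v => ltX (proj1_sig u) (proj1_sig v)
  | Some u, None => D (proj1_sig u)
  | None, Some v => ~ D (proj1_sig v)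
  | None, None => False
  end.

Definition extension_cut {F : X -> Prop} {T : Type} (ltT : T -> T -> Prop)
  (e : {x | F x} -> T) (t0 : T) (a : X) : Prop :=
  exists h : F a, ltT (e (exist F a h)) t0.

Hypothesis HX : strict_linear_order ltX.

Lemma cut_order_linear (F D : X -> Prop) :
  cut F D -> strict_linear_order (cut_order F D).
Proof.
  destruct HX as [Hirr [Htr Htri]]. intros [HDF HDc]. split; [|split].
  - intros [u|]; simpl; auto.
  - intros [u|] [v|] [w|]; simpl; intros h1 h2; try tauto.
    + eauto.
    + eapply HDc; eauto. apply proj2_sig.
    + destruct (Htri (proj1_sig u) (proj1_sig w)) as [h|[h|h]]; auto.
      * rewrite h in h1. contradiction.
      * exfalso. apply h2. eapply HDc; eauto. apply proj2_sig.
    + intro hw. apply h1. eapply HDc; eauto. apply proj2_sig.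
  - intros [u|] [v|]; simpl.
    + destruct (Htri (proj1_sig u) (proj1_sig v)) as [h|[h|h]]; auto.
      right; left. f_equal. now apply proj1_sig_inj.
    + destruct (classic (D (proj1_sig u))); tauto.
    + destruct (classic (D (proj1_sig v))); tauto.
    + auto.
Qed.

Lemma cut_prime_extension (F D : X -> Prop) :
  finite_set F -> cut F D -> prime_extension ltX F (cut_order F D) Some.
Proof.
  intros Hfin HD. split; [now apply cut_order_linear|split; [|split]].
  - now apply finite_option_sig.
  - intros u v; simpl; tauto.
  - exists None. intros [u|]; split; intro h.
    + now exists u.
    + discriminate.
    + now destruct h.
    + destruct h as [u hu]; discriminate.
Qed.

Lemma cut_realization_point (F D C : X -> Prop) :
  realization ltX F (cut_order F D) Some C ->
  exists c, cut_interval F D c /\ forall x, C x <-> add_point F c x.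
Proof.
  intros [_ [FC [phi [Hinj [Hsur [Hphi Hphie]]]]]].
  exists (proj1_sig (phi None)). split; [split|].
  - intro hF. assert (E : phi (Some (exist F _ hF)) = phi None).
    { apply proj1_sig_inj. now rewrite Hphie. }
    apply Hinj in E. discriminate.
  - intros a ha. pose proof (Hphi (Some (exist F a ha)) None) as h.
    rewrite Hphie in h. simpl in h. tauto.
  - intro x. unfold add_point. split.
    + intro hx. destruct (Hsur (exist C x hx)) as [[u|] Ht]; [left|right].
      * apply (f_equal (@proj1_sig _ _)) in Ht. simpl in Ht.
        rewrite <- Ht, Hphie. apply proj2_sig.
      * now rewrite Ht.
    + intros [hx| ->]; [now apply FC|apply proj2_sig].
Qed.

Section PrimeExtension.
Variables (F : X -> Prop) (T : Type) (ltT : T -> T -> Prop) (e : {x | F x} -> T) (t0 : T).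
Hypothesis He : prime_extension ltX F ltT e.
Hypothesis Ht0 : forall t, t <> t0 <-> exists u, e u = t.

Lemma cut_extension_cut : cut F (extension_cut ltT e t0).
Proof.
  destruct He as [[_ [HTtr _]] [_ [Hord _]]]. split.
  - now intros a [h _].
  - intros a a' ha [ha' h'] hlt. exists ha. apply HTtr with (e (exist F a' ha')); [|exact h'].
    now apply Hord.
Qed.

Lemma extension_cut_iff (u : {x | F x}) :
  extension_cut ltT e t0 (proj1_sig u) <-> ltT (e u) t0.
Proof.
  destruct u as [x hx]. simpl. split.
  - intros [h h']. now rewrite (proof_irrelevance _ hx h).
  - intro h. now exists hx.
Qed.

Lemma extension_point_fresh (u : {x | F x}) : e u <> t0.
Proof. intro h. apply (proj2 (Ht0 (e u))); eauto. Qed.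

Lemma extension_point_cases (t : T) : t = t0 \/ exists u, e u = t.
Proof. destruct (classic (t = t0)); [now left|right]. now apply Ht0. Qed.

Lemma extension_point_map (c : X) :
  exists phi : T -> {x | add_point F c x},
    proj1_sig (phi t0) = c /\ forall u, proj1_sig (phi (e u)) = proj1_sig u.
Proof.
  destruct He as [[HTirr _] [_ [Hord _]]].
  assert (Hspec : forall t, exists w : {x | add_point F c x},
    (t = t0 /\ proj1_sig w = c) \/ (exists u, e u = t /\ proj1_sig w = proj1_sig u)).
  { intro t. destruct (extension_point_cases t) as [->|[u <-]].
    - exists (exist _ c (or_intror eq_refl)). now left.
    - exists (exist _ (proj1_sig u) (or_introl (proj2_sig u))). right; eauto. }
  destruct (choice _ Hspec) as [phi Hphi]. exists phi. split.
  - destruct (Hphi t0) as [[_ h]|[u [hu _]]]; [exact h|destruct (extension_point_fresh hu)].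
  - intro u. destruct (Hphi (e u)) as [[h _]|[u' [hu h]]]; [destruct (extension_point_fresh h)|].
    apply (order_embedding_injective (sub_lt_linear HX F) HTirr
      (fun u v => iff_sym (Hord u v))) in hu.
    now subst.
Qed.

Lemma realization_add_point (c : X) : finite_set F ->
  cut_interval F (extension_cut ltT e t0) c -> realization ltX F ltT e (add_point F c).
Proof.
  destruct He as [HT [_ [Hord _]]]. pose proof HT as [HTirr _].
  intros Hfin [HcF HcI].
  destruct (extension_point_map c) as [phi [Pt0 Pe]].
  assert (Hphi_lt : forall t t', ltT t t' <-> ltX (proj1_sig (phi t)) (proj1_sig (phi t'))).
  { intros t t'.
    destruct (extension_point_cases t) as [->|[u <-]];
      destruct (extension_point_cases t') as [->|[v <-]]; rewrite ?Pt0, ?Pe.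
    - split; intro h; [destruct (HTirr _ h)|destruct (proj1 HX _ h)].
    - assert (Hcv : c <> proj1_sig v) by (intros ->; apply HcF, proj2_sig).
      rewrite <- (not_lt_iff HT (not_eq_sym (extension_point_fresh (u := v)))),
        <- (not_lt_iff HX Hcv), <- extension_cut_iff.
      now rewrite (HcI _ (proj2_sig v)).
    - now rewrite (HcI _ (proj2_sig u)), extension_cut_iff.
    - apply Hord. }
  split; [now apply finite_add_point|split; [now left|]].
  exists phi. split; [|split; [|split]]; [|intros [x [hx|<-]]| exact Hphi_lt | exact Pe].
  - exact (order_embedding_injective HT (proj1 (sub_lt_linear HX _)) Hphi_lt).
  - exists (e (exist F x hx)). apply proj1_sig_inj. now rewrite Pe.
  - exists t0. now apply proj1_sig_inj.
Qed.

End PrimeExtension.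

Lemma extendable_iff_cuts (O : Type) (ltO : O -> O -> Prop) (F : X -> Prop) (b : O) :
  finite_set F ->
  extendable ltX ltO F b <->
  (forall D, cut F D -> exists c, cut_interval F D c /\ rk_ge ltX ltO (add_point F c) b).
Proof.
  intro Hfin. split.
  - intros H D HD.
    destruct (H _ _ _ (cut_prime_extension Hfin HD)) as [C [HC HrC]].
    destruct (cut_realization_point HC) as [c [Hc HCc]].
    exists c. split; [exact Hc|]. exact (rk_ge_ext HCc HrC).
  - intros H T ltT e Hpe. pose proof Hpe as [_ [_ [_ [t0 Ht0]]]].
    destruct (H _ (cut_extension_cut t0 Hpe)) as [c [Hc Hrk]].
    exists (add_point F c). split; [exact (realization_add_point Hpe Ht0 Hfin Hc)|exact Hrk].
Qed.

End Cuts.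

Section SuborderRank.
Variables (X : Type) (ltX : X -> X -> Prop) (O : Type) (ltO : O -> O -> Prop).

Definition rk_sub_ge (P : X -> Prop) (a : O) : Prop :=
  rk_struct_ge (sub_lt ltX P) ltO a.

Lemma rk_sub_ge_ext {P Q : X -> Prop} {a : O} :
  (forall x, P x <-> Q x) -> rk_sub_ge P a -> rk_sub_ge Q a.
Proof. intro H; now rewrite (pred_ext P Q H). Qed.

Hypothesis HO : well_order ltO.

Lemma rk_sub_ge_mono {P : X -> Prop} {a b : O} :
  ltO b a -> rk_sub_ge P a -> rk_sub_ge P b.
Proof. intros Hba H. exact (rk_ge_mono HO H Hba). Qed.

Lemma rk_sub_ge_nested (P : X -> Prop) (Q : {y | P y} -> Prop) (R : X -> Prop) (a : O) :
  (forall y (h : P y), Q (exist P y h) <-> R y) -> (forall y, R y -> P y) ->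
  rk_sub_ge R a <-> rk_struct_ge (sub_lt (sub_lt ltX P) Q) ltO a.
Proof.
  intros HQR HRP.
  assert (HQR' : forall w, Q w <-> R (proj1_sig w)) by (intros [y h]; apply HQR).
  set (f := fun z : {w | Q w} =>
    exist R (proj1_sig (proj1_sig z)) (proj1 (HQR' _) (proj2_sig z))).
  set (g := fun w : {y | R y} =>
    let z := exist P (proj1_sig w) (HRP _ (proj2_sig w)) in
    exist Q z (proj2 (HQR' z) (proj2_sig w))).
  assert (gf : forall z, g (f z) = z) by (intro z; now do 2 apply proj1_sig_inj).
  assert (fg : forall w, f (g w) = w) by (intro w; now apply proj1_sig_inj).
  split.
  - exact (rk_ge_iso _ g f fg gf (fun _ _ => iff_refl _) HO _ (fun _ => iff_refl False)).
  - exact (rk_ge_iso _ f g gf fg (fun _ _ => iff_refl _) HO _ (fun _ => iff_refl False)).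
Qed.
End SuborderRank.

Section AddPoint.
Variables (X : Type) (ltX : X -> X -> Prop).

Lemma cut_interval_ext {F D D' : X -> Prop} {y : X} :
  (forall a, F a -> (D a <-> D' a)) -> cut_interval ltX F D y <-> cut_interval ltX F D' y.
Proof.
  intro H. unfold cut_interval. split; intros [h1 h2]; split; auto;
    intros a ha; rewrite (h2 a ha); [|symmetry]; auto.
Qed.

Lemma cut_interval_add_point (F D : X -> Prop) (c y : X) :
  cut_interval ltX (add_point F c) D y <->
  cut_interval ltX F (fun x => F x /\ D x) y /\ y <> c /\ (ltX c y <-> D c).
Proof.
  unfold cut_interval, add_point. split.
  - intros [h1 h2]. split; [split|split].
    + tauto.
    + intros a ha. rewrite (h2 a (or_introl ha)). tauto.
    + intros ->. apply h1. now right.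
    + apply h2. now right.
  - intros [[h1 h2] [h3 h4]]. split.
    + intros [k|k]; tauto.
    + intros a [ha| ->]; [rewrite (h2 a ha); tauto|exact h4].
Qed.

Lemma cut_restrict (F D : X -> Prop) (c : X) :
  cut ltX (add_point F c) D -> cut ltX F (fun x => F x /\ D x).
Proof.
  intros [_ HDc]. split; [tauto|].
  intros x x' hx [_ hx'] k. split; [exact hx|]. apply HDc with x'; [now left|exact hx'|exact k].
Qed.

Hypothesis HX : strict_linear_order ltX.
Variables (F D : X -> Prop) (c : X).
Hypotheses (HD : cut ltX F D) (Hc : cut_interval ltX F D c).

Lemma cut_add_below : cut ltX (add_point F c) D.
Proof.
  destruct HX as [Hirr [Htr _]], HD as [HDF HDc], Hc as [_ HcI].
  split; [intros x hx; left; now apply HDF|].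
  intros x x' [hx| ->] hx' k; [now apply HDc with x'|].
  assert (k' : ltX x' c) by (apply HcI; [apply HDF|]; exact hx').
  destruct (Hirr _ (Htr _ _ _ k k')).
Qed.

Lemma cut_add_above : cut ltX (add_point F c) (add_point D c).
Proof.
  destruct HD as [HDF HDc], Hc as [_ HcI]. unfold add_point.
  split; [intros x [hx|hx]; [left; now apply HDF|now right]|].
  intros x x' [hx| ->] [hx'| ->] k; auto.
  - left; now apply HDc with x'.
  - left; now apply HcI.
Qed.

Lemma cut_interval_add_below (y : X) :
  cut_interval ltX (add_point F c) D y <-> cut_interval ltX F D y /\ ltX y c.
Proof.
  rewrite cut_interval_add_point, (cut_interval_ext (D' := D)) by tauto.
  assert (HDc : ~ D c) by (intro h; apply (proj1 Hc), (proj1 HD), h).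
  split.
  - intros [Hy [Hyc Hlt]]. split; [exact Hy|]. apply (not_lt_iff HX Hyc). tauto.
  - intros [Hy Hlt]. assert (Hyc : y <> c) by (intros ->; exact (proj1 HX _ Hlt)).
    apply (not_lt_iff HX Hyc) in Hlt. tauto.
Qed.

Lemma cut_interval_add_above (y : X) :
  cut_interval ltX (add_point F c) (add_point D c) y <-> cut_interval ltX F D y /\ ltX c y.
Proof.
  assert (Hagree : forall a, F a -> (F a /\ add_point D c a <-> D a)).
  { intros a ha. unfold add_point. split; [intros [_ [h| ->]]; [exact h|now destruct (proj1 Hc)]|].
    intro h; split; [exact ha|now left]. }
  rewrite cut_interval_add_point, (cut_interval_ext Hagree).
  unfold add_point. split.
  - intros [Hy [_ Hlt]]. split; [exact Hy|]. apply Hlt. now right.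
  - intros [Hy Hlt]. split; [exact Hy|split; [|tauto]].
    intros ->. exact (proj1 HX _ Hlt).
Qed.

Lemma cut_interval_add_other (D' : X -> Prop) (y : X) :
  cut ltX (add_point F c) D' -> ~ (forall x, F x -> (D' x <-> D x)) ->
  cut_interval ltX (add_point F c) D' y <-> cut_interval ltX F (fun x => F x /\ D' x) y.
Proof.
  destruct HX as [Hirr [Htr Htri]], Hc as [HcF HcI]. intros [_ HD'c] Hdiff.
  rewrite cut_interval_add_point. split; [tauto|]. intros Hy. split; [exact Hy|].
  destruct Hy as [HyF HyI].
  apply not_all_ex_not in Hdiff as [x Hx]. apply imply_to_and in Hx as [Fx Hx].
  assert (Hxc : x <> c) by (intros ->; exact (HcF Fx)).
  destruct (classic (D' x)) as [D'x|nD'x].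
  - assert (Hcx : ltX c x).
    { apply (not_lt_iff HX (not_eq_sym Hxc)). rewrite (HcI x Fx). tauto. }
    assert (Hxy : ltX x y) by now apply HyI.
    assert (Hcy : ltX c y) by exact (Htr _ _ _ Hcx Hxy).
    split; [intros ->; exact (Hirr _ Hcy)|].
    split; [intros _; apply HD'c with x; [now right|exact D'x|exact Hcx]|now intros _].
  - assert (Hxc' : ltX x c) by (apply HcI; [exact Fx|tauto]).
    assert (Hyx : ltX y x).
    { assert (Hyx : y <> x) by (intros ->; exact (HyF Fx)).
      apply (not_lt_iff HX Hyx). rewrite (HyI x Fx). tauto. }
    assert (Hyc : ltX y c) by exact (Htr _ _ _ Hyx Hxc').
    split; [intros ->; exact (Hirr _ Hyc)|].
    split; intro k; exfalso.
    + exact (Hirr _ (Htr _ _ _ Hyc k)).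
    + apply nD'x, HD'c with c; [now left|exact k|exact Hxc'].
Qed.

End AddPoint.

Section SuccessorStep.
Variables (O : Type) (ltO : O -> O -> Prop) (a b : O).
Hypotheses (HO : well_order ltO) (Hab : is_succ_of ltO a b).
Hypothesis IH : forall (X : Type) (ltX : X -> X -> Prop) (F : X -> Prop),
  strict_linear_order ltX -> finite_set F ->
  rk_ge ltX ltO F b <->
  (forall D, cut ltX F D -> rk_sub_ge ltX ltO (cut_interval ltX F D) b).

Section Halves.
Variables (X : Type) (ltX : X -> X -> Prop) (F D : X -> Prop) (c : X).
Hypotheses (HX : strict_linear_order ltX) (Hfin : finite_set F).
Hypotheses (HD : cut ltX F D) (Hc : cut_interval ltX F D c).

Lemma rk_ge_add_point_halves :
  rk_ge ltX ltO (add_point F c) b ->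
  rk_sub_ge ltX ltO (fun y => cut_interval ltX F D y /\ ltX y c) b /\
  rk_sub_ge ltX ltO (fun y => cut_interval ltX F D y /\ ltX c y) b.
Proof.
  rewrite (IH HX (finite_add_point c Hfin)). intro H. split.
  - apply (rk_sub_ge_ext (cut_interval_add_below HX HD Hc)), H, cut_add_below; assumption.
  - apply (rk_sub_ge_ext (cut_interval_add_above HX Hc)), H, cut_add_above; assumption.
Qed.

Lemma rk_ge_add_point_of_halves :
  rk_sub_ge ltX ltO (fun y => cut_interval ltX F D y /\ ltX y c) b ->
  rk_sub_ge ltX ltO (fun y => cut_interval ltX F D y /\ ltX c y) b ->
  (forall D', cut ltX F D' -> ~ (forall x, F x -> (D' x <-> D x)) ->
     rk_sub_ge ltX ltO (cut_interval ltX F D') b) ->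
  rk_ge ltX ltO (add_point F c) b.
Proof.
  intros Hbelow Habove Hother. apply (IH HX (finite_add_point c Hfin)). intros D' HD'.
  assert (HcF : ~ F c) by exact (proj1 Hc).
  destruct (classic (forall x, F x -> (D' x <-> D x))) as [Hsame|Hdiff].
  - destruct (classic (D' c)) as [D'c|nD'c].
    + assert (Hagree : forall x, add_point F c x -> (add_point D c x <-> D' x)).
      { unfold add_point. intros x [hx| ->]; [|tauto].
        rewrite (Hsame x hx). split; [intros [h| ->]; [exact h|contradiction]|now left]. }
      apply (rk_sub_ge_ext (fun y => iff_trans (iff_sym (cut_interval_add_above HX Hc y))
                                                (cut_interval_ext _ Hagree))).
      exact Habove.
    + assert (Hagree : forall x, add_point F c x -> (D x <-> D' x)).
      { unfold add_point. intros x [hx| ->]; [now rewrite (Hsame x hx)|].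
        split; [intro h; destruct (HcF (proj1 HD _ h))|tauto]. }
      apply (rk_sub_ge_ext (fun y => iff_trans (iff_sym (cut_interval_add_below HX HD Hc y))
                                                (cut_interval_ext _ Hagree))).
      exact Hbelow.
  - apply (rk_sub_ge_ext (fun y => iff_sym (cut_interval_add_other HX Hc y HD' Hdiff))).
    apply Hother; [exact (cut_restrict HD')|].
    intros Hsame. apply Hdiff. intros x hx. rewrite <- (Hsame x hx). tauto.
Qed.

End Halves.

Lemma rk_sub_ge_succ_iff (X : Type) (ltX : X -> X -> Prop) (P : X -> Prop) :
  strict_linear_order ltX ->
  rk_sub_ge ltX ltO P a <->
  exists c, P c /\ rk_sub_ge ltX ltO (fun y => P y /\ ltX y c) b /\
                   rk_sub_ge ltX ltO (fun y => P y /\ ltX c y) b.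
Proof.
  (* Inside the suborder [P], adjoin a point to the empty set: its only interval is [P]. *)
  intro HX. set (ltS := sub_lt ltX P).
  assert (HS : strict_linear_order ltS) by exact (sub_lt_linear HX P).
  set (empty := fun _ : {y | P y} => False).
  assert (Hfin : finite_set empty) by (exists nil; simpl; tauto).
  assert (Hcut : cut ltS empty empty) by (split; unfold empty; tauto).
  assert (Hall : forall z, cut_interval ltS empty empty z) by (split; unfold empty; tauto).
  assert (Hhalves : forall c : {y | P y},
    rk_ge ltS ltO (add_point empty c) b <->
    rk_sub_ge ltX ltO (fun y => P y /\ ltX y (proj1_sig c)) b /\
    rk_sub_ge ltX ltO (fun y => P y /\ ltX (proj1_sig c) y) b).
  { intro c.
    rewrite (rk_sub_ge_nested ltX HO P (fun z => cut_interval ltS empty empty z /\ ltS z c)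
               (fun y => P y /\ ltX y (proj1_sig c))) by (simpl; intuition apply Hall).
    rewrite (rk_sub_ge_nested ltX HO P (fun z => cut_interval ltS empty empty z /\ ltS c z)
               (fun y => P y /\ ltX (proj1_sig c) y)) by (simpl; intuition apply Hall).
    split.
    - exact (rk_ge_add_point_halves HS Hfin Hcut (Hall c)).
    - intros [Hbelow Habove].
      apply (rk_ge_add_point_of_halves HS Hfin Hcut (Hall c) Hbelow Habove).
      intros D' _ Hne. destruct Hne. unfold empty. tauto. }
  unfold rk_sub_ge at 1, rk_struct_ge. fold ltS empty.
  rewrite (rk_ge_succ_iff _ HO Hab), (extendable_iff_cuts HS _ _ Hfin). split.
  - intro H. destruct (H _ Hcut) as [c [_ Hr]].
    exists (proj1_sig c). split; [apply proj2_sig|]. now apply Hhalves.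
  - intros [c [Pc Hr]] D HD. exists (exist P c Pc).
    split; [split; [tauto|intros _ []]|]. now apply Hhalves.
Qed.

Lemma rk_ge_succ_iff_cut_intervals (X : Type) (ltX : X -> X -> Prop) (F : X -> Prop) :
  strict_linear_order ltX -> finite_set F ->
  rk_ge ltX ltO F a <->
  (forall D, cut ltX F D -> rk_sub_ge ltX ltO (cut_interval ltX F D) a).
Proof.
  intros HX Hfin. rewrite (rk_ge_succ_iff _ HO Hab), (extendable_iff_cuts HX _ _ Hfin). split.
  - intros H D HD. apply (rk_sub_ge_succ_iff _ HX).
    destruct (H D HD) as [c [Hc Hr]]. exists c. split; [exact Hc|].
    exact (rk_ge_add_point_halves HX Hfin HD Hc Hr).
  - intros H D HD.
    destruct (proj1 (rk_sub_ge_succ_iff _ HX) (H D HD)) as [c [Hc [Hbelow Habove]]].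
    exists c. split; [exact Hc|].
    apply (rk_ge_add_point_of_halves HX Hfin HD Hc Hbelow Habove).
    intros D' HD' _. exact (rk_sub_ge_mono HO (proj1 Hab) (H D' HD')).
Qed.

End SuccessorStep.

Theorem rk_ge_iff_cut_intervals (O : Type) (ltO : O -> O -> Prop) (HO : well_order ltO)
  (a : O) (X : Type) (ltX : X -> X -> Prop) (F : X -> Prop) :
  strict_linear_order ltX -> finite_set F ->
  rk_ge ltX ltO F a <->
  (forall D, cut ltX F D -> rk_sub_ge ltX ltO (cut_interval ltX F D) a).
Proof.
  pose proof HO as [_ Hwf]. revert X ltX F.
  induction a as [a IH] using (well_founded_ind Hwf). intros X ltX F HX Hfin.
  destruct (ordinal_cases ltO a) as [Hz|[[b Hs]|Hl]].
  - split; intros; now apply rk_ge_zero.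
  - exact (rk_ge_succ_iff_cut_intervals HO Hs (IH b (proj1 Hs)) HX Hfin).
  - split.
    + intros H D HD. apply rk_ge_limit; [exact Hl|]. intros b hb.
      apply (IH b hb X ltX F HX Hfin); [exact (rk_ge_mono HO H hb)|exact HD].
    + intros H. apply rk_ge_limit; [exact Hl|]. intros b hb.
      apply (IH b hb X ltX F HX Hfin). intros D HD. exact (rk_sub_ge_mono HO hb (H D HD)).
Qed.

Section SortedLists.
Variables (Y : Type) (ltY : Y -> Y -> Prop).
Hypothesis HY : strict_linear_order ltY.

Lemma StronglySorted_app_lt {l1 l2 : list Y} {a b : Y} :
  StronglySorted ltY (l1 ++ l2) -> In a l1 -> In b l2 -> ltY a b.
Proof.
  induction l1 as [|x l1 IH]; simpl; intros H ha hb; [contradiction|].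
  apply StronglySorted_inv in H as [H1 H2]. destruct ha as [<-|ha].
  - rewrite Forall_forall in H2. apply H2, in_or_app; now right.
  - now apply IH.
Qed.

Lemma cut_firstn (l : list Y) (j : nat) :
  StronglySorted ltY l -> cut ltY (fun y => In y l) (fun a => In a (firstn j l)).
Proof.
  destruct HY as [Hirr [Htr _]]. intros HS. split.
  - intro a. rewrite <- (firstn_skipn j l) at 2. intro h; apply in_or_app; now left.
  - intros a b ha hb k. rewrite <- (firstn_skipn j l) in ha, HS.
    apply in_app_or in ha as [ha|ha]; [exact ha|].
    destruct (Hirr _ (Htr _ _ _ k (StronglySorted_app_lt HS hb ha))).
Qed.

Lemma cut_eq_firstn (l : list Y) (D : Y -> Prop) :
  StronglySorted ltY l -> cut ltY (fun y => In y l) D ->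
  exists j, (j <= length l)%nat /\ forall a, In a l -> (D a <-> In a (firstn j l)).
Proof.
  revert D. induction l as [|a l IH]; intros D HS [HDl HDc].
  - exists 0. simpl. split; [lia|tauto].
  - apply StronglySorted_inv in HS as [HS Ha]. rewrite Forall_forall in Ha.
    destruct (IH (fun x => D x /\ In x l) HS) as [j [Hj Hjl]].
    { split; [tauto|]. intros x y hx [hy hy'] k. split; [|exact hx].
      apply HDc with y; [now right|exact hy|exact k]. }
    destruct (classic (D a)) as [Da|nDa].
    + exists (S j). simpl. split; [lia|]. intros x [<-|hx]; [tauto|].
      rewrite <- (Hjl x hx). split; [tauto|]. intros [<-|h]; tauto.
    + exists 0. simpl. split; [lia|]. intros x [<-|hx]; [tauto|].
      split; [|tauto]. intro Dx. apply nDa, HDc with x; [now left|exact Dx|now apply Ha].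
Qed.

Lemma in_interval_cons_succ (a : Y) (l : list Y) (k : nat) (y : Y) :
  StronglySorted ltY (a :: l) ->
  in_interval ltY (a :: l) (S k) y <-> ltY a y /\ in_interval ltY l k y.
Proof.
  destruct HY as [Hirr [Htr _]]. intro HS.
  apply StronglySorted_inv in HS as [_ Ha]. rewrite Forall_forall in Ha.
  unfold in_interval. simpl. destruct k as [|k]; simpl.
  - split; [intros [h1 h2]|intros [h1 [_ h2]]]; repeat split; auto; intro; apply h2; lia.
  - split; [intros [h1 h2]|intros [_ [h1 h2]]]; repeat split; auto; try (intro; apply h2; lia).
    destruct (Compare_dec.lt_dec k (length l)) as [lt|ge].
    + exact (Htr _ _ _ (Ha _ (nth_In l y lt)) h1).
    + rewrite nth_overflow in h1 by lia. destruct (Hirr _ h1).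
Qed.

Lemma in_interval_iff_cut_interval (l : list Y) (j : nat) (y : Y) :
  StronglySorted ltY l -> (j <= length l)%nat ->
  in_interval ltY l j y <->
  cut_interval ltY (fun b => In b l) (fun b => In b (firstn j l)) y.
Proof.
  pose proof HY as [Hirr [Htr _]]. unfold cut_interval.
  revert j; induction l as [|a l IH]; intros j HS Hj.
  - simpl in Hj. replace j with 0 by lia. unfold in_interval. simpl.
    split; [intros _; split; [auto|intros; contradiction]|intros _; split; auto; lia].
  - pose proof HS as [HSl Ha]%StronglySorted_inv. rewrite Forall_forall in Ha.
    destruct j as [|k].
    + unfold in_interval. simpl. split.
      * intros [_ h]. assert (ya : ltY y a) by (apply h; lia). split.
        -- intros [<-|E]; [exact (Hirr _ ya)|exact (Hirr _ (Htr _ _ _ ya (Ha _ E)))].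
        -- intros b hb; split; [|tauto]. intro k. destruct hb as [<-|hb].
           ++ exact (Hirr _ (Htr _ _ _ k ya)).
           ++ exact (Hirr _ (Htr _ _ _ (Htr _ _ _ k ya) (Ha _ hb))).
      * intros [h1 h2]. split; [exact I|]. intros _.
        apply (not_lt_iff HY); [intros ->; apply h1; now left|].
        rewrite (h2 a (or_introl eq_refl)). tauto.
    + simpl in Hj. rewrite (in_interval_cons_succ k y HS), (IH k HSl) by lia. simpl.
      assert (Hna : forall b, In b l -> a <> b) by (intros b hb <-; exact (Hirr _ (Ha _ hb))).
      split.
      * intros [ay [h1 h2]]. split; [intros [<-|E]; [exact (Hirr _ ay)|auto]|].
        intros b [<-|hb]; [tauto|]. rewrite (h2 b hb). specialize (Hna b hb). tauto.
      * intros [h1 h2]. assert (ay : ltY a y) by (apply h2; auto). split; [exact ay|].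
        split; [tauto|]. intros b hb. rewrite (h2 b (or_intror hb)).
        specialize (Hna b hb). tauto.
Qed.

End SortedLists.

Theorem proposition6p5
  (Y : Type) (ltY : Y -> Y -> Prop)
  (HY : strict_linear_order ltY) (HYc : countable_type Y)
  (l : list Y) (Hl : Sorted ltY l)
  (O : Type) (ltO : O -> O -> Prop) (HO : well_order ltO) (alpha : O) :
  rk_ge ltY ltO (fun y => In y l) alpha <->
  (forall j : nat, (j <= length l)%nat ->
     rk_struct_ge (@interval_lt Y ltY l j) ltO alpha).
Proof.
  assert (HS : StronglySorted ltY l).
  { apply Sorted_StronglySorted; [intros x y z; apply HY|exact Hl]. }
  assert (Hfin : finite_set (fun y => In y l)) by (exists l; tauto).
  rewrite (rk_ge_iff_cut_intervals HO alpha HY Hfin). split.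
  - intros H j Hj. change (rk_sub_ge ltY ltO (in_interval ltY l j) alpha).
    refine (rk_sub_ge_ext _ (H _ (cut_firstn HY j HS))).
    intro y. symmetry. exact (in_interval_iff_cut_interval HY y HS Hj).
  - intros H D HD. destruct (cut_eq_firstn HS HD) as [j [Hj HjD]].
    refine (rk_sub_ge_ext _ (H j Hj)). intro y.
    rewrite (in_interval_iff_cut_interval HY y HS Hj).
    apply cut_interval_ext. intros a ha. symmetry. exact (HjD a ha).
Qed.
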